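(* Let $G=(V,E)$ be a graph and $X\in\{0,1\}^V$ any marking vector, and let $I_X$ be the independent set returned by FIND-IS on $X$. Then $H(I_X)\ge S(X)/2$.
   Context: Identify $V$ with $[n]$ so that $d(u)\le d(v)$ whenever $u<v$, where $d(v)$ is the degree of $v$ and $N(v)$ its neighborhood. FIND-IS on marking vector $X$: vertices $v$ with $X(v)=1$ are marked; for every edge with both endpoints marked, the endpoint with smaller index (lower degree, ties broken by index) is unmarked; $I_X$ is the set of vertices remaining marked, i.e. $I_X=\{w: X(w)=1$ and no neighbor $u>w$ has $X(u)=1\}$. For an independent set $I$, $H(I)$ is the number of edges of $G$ having at least one endpoint in $I\cup N(I)$ (the edges deleted when forming the residual graph). For each vertex $v$ let $G(v)=\sum_{w\in N(v)}1/d(w)$ and $a_v=\min(1,1/G(v))$. Define $$S(v,X)=a_v\sum_{w\in N(v)}X(w)-a_v^2\sum_{\substack{w<w'\\ w,w'\in N(v)}}X(w)X(w')-a_v\sum_{w\in N(v)}\ \sum_{\substack{u:\,(w,u)\in E\\ w<u}}X(w)X(u),$$ and $S(X)=\sum_v d(v)S(v,X)$. *)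

(* Graph on vertex set [n] = 'I_n, given by a symmetric
   irreflexive relation e. *)
From HB Require Import structures.
From mathcomp Require Import all_boot all_order all_algebra.
Set Implicit Arguments. Unset Strict Implicit. Unset Printing Implicit Defensive.
Import Order.TTheory GRing.Theory Num.Theory.

Definition nbhd n (e : rel 'I_n) (v : 'I_n) : {set 'I_n} := [set w | e v w].
Definition deg n (e : rel 'I_n) (v : 'I_n) : nat := #|nbhd e v|.

Definition findIS n (e : rel 'I_n) (X : 'I_n -> bool) : {set 'I_n} :=
  [set w | X w && [forall u, (e w u && (w < u)%N) ==> ~~ X u]].

Definition nbhdS n (e : rel 'I_n) (I : {set 'I_n}) : {set 'I_n} :=
  [set u | [exists w in I, e w u]].

Definition Hval n (e : rel 'I_n) (I : {set 'I_n}) : nat :=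
  #|[set p : 'I_n * 'I_n | [&& (p.1 < p.2)%N, e p.1 p.2 &
       (p.1 \in I :|: nbhdS e I) || (p.2 \in I :|: nbhdS e I)]]|.

Local Open Scope ring_scope.

Definition Gv (R : realFieldType) n (e : rel 'I_n) (v : 'I_n) : R :=
  \sum_(w in nbhd e v) 1 / (deg e w)%:R.

Definition av (R : realFieldType) n (e : rel 'I_n) (v : 'I_n) : R :=
  Num.min 1 (1 / Gv R e v).

Definition Sv (R : realFieldType) n (e : rel 'I_n) (X : 'I_n -> bool) (v : 'I_n) : R :=
  av R e v * (\sum_(w in nbhd e v) (X w)%:R)
  - (av R e v) ^+ 2 *
      (\sum_(w in nbhd e v) \sum_(w' in nbhd e v | (w < w')%N) (X w)%:R * (X w')%:R)
  - av R e v *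
      (\sum_(w in nbhd e v) \sum_(u | e w u && (w < u)%N) (X w)%:R * (X u)%:R).

Definition Sval (R : realFieldType) n (e : rel 'I_n) (X : 'I_n -> bool) : R :=
  \sum_v (deg e v)%:R * Sv R e X v.

From HB Require Import structures.
From mathcomp Require Import all_boot all_order all_algebra.
From mathcomp Require Import lra.
Import Order.TTheory GRing.Theory Num.Theory.
Set Implicit Arguments. Unset Strict Implicit. Unset Printing Implicit Defensive.
Local Open Scope ring_scope.

(* For a vertex v, let J = N(v) ∩ I_X and j = |J|.  A marked neighbour of v
   outside I_X has a marked neighbour of larger index, so it is paid for by the
   last sum of S(v,X), while the marked pairs of neighbours include the C(j,2)
   pairs inside J.  Hence S(v,X) <= a_v j - a_v^2 C(j,2), which is 0 when j = 0
   and at most 1 since 0 <= a_v <= 1 (a Bonferroni bound); and j > 0 puts v in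
   N(I_X).  Thus S(v,X) <= [v ∈ I_X ∪ N(I_X)], and summing with the weights d(v)
   counts every edge touching I_X ∪ N(I_X) at most twice. *)

Lemma sqr_sum_ltn (R : comPzSemiRingType) n (A : {pred 'I_n}) (F : 'I_n -> R) :
  (\sum_(i in A) F i) ^+ 2 =
  \sum_(i in A) F i ^+ 2 + (\sum_(i in A) \sum_(j in A | (i < j)%N) F i * F j) *+ 2.
Proof.
have split_row i : i \in A -> \sum_(j in A) F i * F j =
    F i ^+ 2 + \sum_(j in A | (i < j)%N) F i * F j + \sum_(j in A | (j < i)%N) F i * F j.
  move=> Ai; rewrite (bigD1 i) //= (bigID (fun j : 'I_n => (i < j)%N)) /= addrA expr2.
  congr (_ + _ + _); apply: eq_bigl => j.
    by rewrite -andbA -val_eqE; congr (_ && _); rewrite andb_idl // => /gtn_eqF ->.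
  by rewrite -andbA -val_eqE -leqNgt -ltn_neqAle.
rewrite expr2 mulr_suml; under eq_bigr => i _ do rewrite mulr_sumr.
rewrite (eq_bigr _ split_row) !big_split /= -addrA mulr2n; congr (_ + (_ + _)).
rewrite (exchange_big_dep (mem A)) => [|i j _ /andP[]//].
apply: eq_bigr => j Aj; apply: eq_big => [i|i _]; last exact: mulrC.
by rewrite [j \in A]Aj.
Qed.

Lemma bin2_double_add m : ('C(m, 2) * 2 + m = m ^ 2)%N.
Proof. by case: m => // k; rewrite mulnC -mul_bin_diag bin1 -mulnSr mulnn. Qed.

Lemma natr_bin2 (R : pzSemiRingType) m : 'C(m, 2)%:R *+ 2 + m%:R = m%:R ^+ 2 :> R.
Proof. by rewrite -natrX -bin2_double_add natrD natrM mulr_natr. Qed.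

Lemma sum_mem_card_setI (R : pzSemiRingType) (T : finType) (A B : {set T}) :
  \sum_(x in A) (x \in B)%:R = #|A :&: B|%:R :> R.
Proof.
rewrite -sum1_card natr_sum big_mkcond [RHS]big_mkcond /=.
by apply: eq_bigr => x _; rewrite in_setI; case: (x \in A); case: (x \in B).
Qed.

Lemma sum1_ltn_pairs (R : numDomainType) n (A : {pred 'I_n}) :
  \sum_(i in A) \sum_(j in A | (i < j)%N) 1 = 'C(#|A|, 2)%:R :> R.
Proof.
have := sqr_sum_ltn A (fun _ => 1 : R).
rewrite expr1n mulr1 !sumr_const -natr_bin2 addrC => /addrI/eqP.
by rewrite eqrMn2r => /eqP.
Qed.

Lemma bonferroni_le1 (R : realDomainType) (a : R) (m : nat) :
  0 <= a <= 1 -> a * m%:R - a ^+ 2 * 'C(m, 2)%:R <= 1.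
Proof.
move=> /andP[a_ge0 a_le1]; have := natr_bin2 R m.
case: m => [|[|k]] bin2m; first by rewrite mulr0 bin0n mulr0 subr0 ler01.
  by rewrite bin_small // mulr0 subr0 mulr1.
set M := k.+2%:R in bin2m *; have M_ge2 : 2 <= M by rewrite ler_nat.
have sq : 0 <= M * (a * (M - 1) - 1) ^+ 2 by rewrite mulr_ge0 ?sqr_ge0 //; lra.
(* 2(M-1)(aM - a²C) = M(2a(M-1) - a²(M-1)²) <= M <= 2(M-1) *)
rewrite -(ler_pM2l (_ : 0 < (M - 1) *+ 2)); last by rewrite pmulrn_lgt0 //; lra.
nra.
Qed.

Section FindIS.

Variables (n : nat) (e : rel 'I_n) (X : 'I_n -> bool).
Local Notation I := (findIS e X).

Lemma findIS_marked w : w \in I -> X w.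
Proof. by rewrite inE => /andP[]. Qed.

Lemma marked_notin_findIS w :
  X w -> w \notin I -> exists2 u, e w u && (w < u)%N & X u.
Proof.
rewrite inE => -> /=; rewrite negb_forall => /existsP[u].
by rewrite negb_imply negbK => /andP[]; exists u.
Qed.

Variable R : realFieldType.

Lemma marked_le_findIS_add_conflicts w :
  (X w)%:R <= (w \in I)%:R + \sum_(u | e w u && (w < u)%N) (X w)%:R * (X u)%:R :> R.
Proof.
have [wI | wI] := boolP (w \in I).
  by rewrite [X w in leLHS](findIS_marked wI) lerDl sumr_ge0 // => u _; rewrite mulr_ge0.
have [Xw | nXw] := boolP (X w); last first.
  by rewrite addr_ge0 // sumr_ge0 // => u _; rewrite mulr_ge0.
have [u euw Xu] := marked_notin_findIS Xw wI.
by rewrite add0r (bigD1 u) //= Xu mulr1 lerDl sumr_ge0 // => u' _; rewrite mulr_ge0.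
Qed.

Variable v : 'I_n.
Local Notation N := (nbhd e v).

Lemma bin2_findIS_nbhd_le :
  'C(#|N :&: I|, 2)%:R <=
  \sum_(w in N) \sum_(w' in N | (w < w')%N) (X w)%:R * (X w')%:R :> R.
Proof.
rewrite -sum1_ltn_pairs [leLHS]big_mkcond [leRHS]big_mkcond /=.
have pair_ge0 w w' : 0 <= (X w)%:R * (X w')%:R :> R by rewrite mulr_ge0.
apply: ler_sum => w _; rewrite in_setI; case: (w \in N) => //=.
have [wI|_] := boolP (w \in I); last exact: sumr_ge0.
rewrite [leLHS]big_mkcond [leRHS]big_mkcond /=; apply: ler_sum => w' _.
rewrite in_setI -andbA; case: (w' \in N) => //=; case: (w < w')%N; rewrite ?andbT ?andbF //.
by case: (boolP (w' \in I)) => [/findIS_marked -> | _] //; rewrite (findIS_marked wI) mulr1.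
Qed.

Lemma av_ge0 : 0 <= av R e v.
Proof.
rewrite le_min ler01 mul1r invr_ge0.
by apply: sumr_ge0 => w _; rewrite mul1r invr_ge0 ler0n.
Qed.

Lemma Sv_le_bonferroni :
  Sv R e X v <= av R e v * #|N :&: I|%:R - av R e v ^+ 2 * 'C(#|N :&: I|, 2)%:R.
Proof.
rewrite /Sv -sum_mem_card_setI; set a := av R e v.
set conflicts := \sum_(w in N) \sum_(u | e w u && (w < u)%N) _.
have marked_le : \sum_(w in N) (X w)%:R <= \sum_(w in N) (w \in I)%:R + conflicts.
  by rewrite -big_split; apply: ler_sum => w _; apply: marked_le_findIS_add_conflicts.
have a_ge0 : 0 <= a := av_ge0.
have := ler_wpM2l a_ge0 marked_le; have := ler_wpM2l (sqr_ge0 a) bin2_findIS_nbhd_le.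
rewrite mulrDr; lra.
Qed.

Hypothesis esym : symmetric e.

Lemma Sv_le_cover : Sv R e X v <= (v \in I :|: nbhdS e I)%:R.
Proof.
apply: le_trans Sv_le_bonferroni _.
have [J0 | [w wJ]] := set_0Vmem (N :&: I).
  by rewrite J0 cards0 bin0n !mulr0 subr0 ler0n.
have -> : v \in I :|: nbhdS e I.
  rewrite in_setU; apply/orP; right; rewrite inE; apply/existsP; exists w.
  by move: wJ; rewrite in_setI [w \in N]inE esym => /andP[-> ->].
by apply: bonferroni_le1; rewrite av_ge0 ge_min lexx.
Qed.

End FindIS.

Lemma sum_deg_le_double_incident n (e : rel 'I_n) (U : {set 'I_n}) :
  symmetric e -> irreflexive e ->
  (\sum_(v in U) deg e v <=
   2 * #|[set p : 'I_n * 'I_n | [&& (p.1 < p.2)%N, e p.1 p.2 & (p.1 \in U) || (p.2 \in U)]]|)%N.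
Proof.
move=> esym eirr.
set c := fun v w : 'I_n => [&& (v < w)%N, e v w & (v \in U) || (w \in U)].
have -> : #|[set p : 'I_n * 'I_n | c p.1 p.2]| = (\sum_v \sum_w c v w)%N.
  by rewrite -sum1dep_card big_mkcond pair_big /=; apply: eq_bigr => p _; case: ifP.
apply: (@leq_trans (\sum_v \sum_w (c v w + c w v))%N).
  rewrite big_mkcond /=; apply: leq_sum => v _; case: ifP => // vU.
  rewrite /deg /nbhd -sum1dep_card big_mkcond /=; apply: leq_sum => w _.
  case: ifP => // evw; rewrite /c vU orbT [e w v]esym evw !andbT.
  have : val v != val w by apply: contraTneq evw => /val_inj ->; rewrite eirr.
  by rewrite neq_ltn => /orP[] ->; rewrite ?addn1.
rewrite mul2n -addnn (eq_bigr _ (fun v _ => big_split _ _ _ _ _)) big_split /=.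
by rewrite [X in (_ + X)%N]exchange_big.
Qed.

Theorem proposition3p1 (R : realFieldType) (n : nat) (e : rel 'I_n)
  (esym : symmetric e) (eirr : irreflexive e)
  (hdeg : forall u v : 'I_n, (u < v)%N -> (deg e u <= deg e v)%N)
  (X : 'I_n -> bool) :
  Sval R e X / 2 <= (Hval e (findIS e X))%:R.
Proof.
set I := findIS e X; set U := I :|: nbhdS e I.
have Sval_le : Sval R e X <= (\sum_(v in U) deg e v)%:R.
  rewrite /Sval natr_sum [leRHS]big_mkcond /=; apply: ler_sum => v _.
  have := ler_wpM2l (ler0n _ (deg e v)) (Sv_le_cover X R v esym).
  by rewrite -/I -/U; case: (v \in U); rewrite ?mulr1n ?mulr0n ?mulr1 ?mulr0.
have := sum_deg_le_double_incident U esym eirr; rewrite -(ler_nat R) natrM -/(Hval e I).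
lra.
Qed.
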